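(* Let $M_1,\dots,M_N$ be matrices in $\mathbb C^{d\times nd}$. Let $\lambda_1,\dots,\lambda_{nd}$ be the eigenvalues of $\sum_{j}M_j^\ast M_j$ and $\nu_1,\dots,\nu_d$ the eigenvalues of $\sum_j M_jM_j^\ast$. Then $\sum_{i=1}^{nd}\lambda_i=\sum_{j=1}^d\nu_j$. Furthermore, if $\max_i\lambda_i\le\frac1d\sum_{j=1}^d\nu_j$, then for every integer $p\ge2$, \[ \Big\|\Big(\sum_j M_jM_j^\ast\Big)^{1/2}\Big\|_{S_{2p}}^{2p}\ge\Big\|\Big(\sum_j M_j^\ast M_j\Big)^{1/2}\Big\|_{S_{2p}}^{2p}. \]
   Context: $A^\ast$ is the conjugate transpose. For a matrix $A$, the Schatten $p$-norm is $\|A\|_{S_p}=\big(\mathrm{tr}\,(A^\ast A)^{p/2}\big)^{1/p}$. *)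

From HB Require Import structures.
From mathcomp Require Import all_boot all_order all_algebra.
Set Implicit Arguments. Unset Strict Implicit. Unset Printing Implicit Defensive.
Import Order.TTheory GRing.Theory Num.Theory.
Local Open Scope ring_scope.
Local Open Scope sesquilinear_scope.

(* Complex numbers: an arbitrary numClosedFieldType C
   (e.g. complex R for R : realType); M ^t* is the conjugate transpose. *)

Definition psdmx (C : numClosedFieldType) (m : nat) (A : 'M[C]_m) : Prop :=
  A \is hermsymmx /\ forall v : 'rV[C]_m, 0 <= (v *m A *m v ^t*) 0 0.

Definition is_psd_sqrt (C : numClosedFieldType) (m : nat) (Y A : 'M[C]_m) : Prop :=
  psdmx Y /\ Y *m Y = A.

(* ||X||_{S_{2p}}^{2p} = tr ((X^* X)^{p}) : the Schatten (2p)-norm raised to the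
   power 2p, with (X^*X)^{2p/2} = (X^*X)^p an integer matrix power *)
Definition schatten_2p_pow (C : numClosedFieldType) (m : nat) (p : nat) (X : 'M[C]_m) : C :=
  \tr ((X ^t* *m X) ^+ p).

From HB Require Import structures.
From mathcomp Require Import all_boot all_order all_algebra.
From mathcomp Require Import ring.
Import Order.TTheory GRing.Theory Num.Theory.
Set Implicit Arguments. Unset Strict Implicit.
Local Open Scope ring_scope.
Local Open Scope sesquilinear_scope.

(* The eigenvalue sums are tr A and tr B for A = sum_j M_j^* M_j and
   B = sum_j M_j M_j^*, which agree by cyclicity of the trace.  Since
   S^* S = S^2 for a Hermitian square root S, the two Schatten quantities are
   tr A^p = sum_i lam_i^p and tr B^p = sum_j nu_j^p, with all eigenvalues
   nonnegative.  Let t be the common sum and c = t/d.  The bound lam_i <= c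
   gives sum_i lam_i^p <= t c^(p-1); summing the tangent-line inequality
   nu^p >= c^p + p c^(p-1) (nu - c) over j gives
   sum_j nu_j^p >= d c^p = t c^(p-1). *)

Lemma exprS_ge_tangent (R : numDomainType) (b c : R) (k : nat) :
  0 <= b -> 0 <= c -> c ^+ k.+1 + k.+1%:R * c ^+ k * (b - c) <= b ^+ k.+1.
Proof.
move=> b0 c0; elim: k => [|k IH].
  by rewrite expr0 mulr1 !expr1 mul1r addrC subrK.
have sq_ge0 : 0 <= k.+1%:R * c ^+ k * (b - c) ^+ 2.
  apply: mulr_ge0; first by rewrite mulr_ge0 ?exprn_ge0.
  by rewrite real_exprn_even_ge0 // realB ?ger0_real.
apply: le_trans (ler_wpM2l b0 IH).
have -> : b * (c ^+ k.+1 + k.+1%:R * c ^+ k * (b - c)) =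
    c ^+ k.+2 + k.+2%:R * c ^+ k.+1 * (b - c) + k.+1%:R * c ^+ k * (b - c) ^+ 2.
  by rewrite !exprS -[k.+2]addn1 -[k.+1]addn1 !natrD; ring.
by rewrite lerDl.
Qed.

Lemma sum_exprS_le_max (R : numDomainType) (I : finType) (x : I -> R) (c : R) k :
  (forall i, 0 <= x i <= c) -> \sum_i x i ^+ k.+1 <= (\sum_i x i) * c ^+ k.
Proof.
move=> x_bnd; rewrite mulr_suml; apply: ler_sum => i _.
have /andP[x0 xc] := x_bnd i.
by rewrite exprS ler_wpM2l // lerXn2r // nnegrE (le_trans x0).
Qed.

Lemma sum_exprS_ge_mean (R : numFieldType) d (y : 'I_d -> R) k :
  (forall j, 0 <= y j) ->
  (\sum_j y j) * (d%:R^-1 * \sum_j y j) ^+ k <= \sum_j y j ^+ k.+1.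
Proof.
case: d y => [|d] y y0; first by rewrite !big_ord0 mul0r.
set t := \sum_j y j; set c := _ * t.
have c0 : 0 <= c by rewrite mulr_ge0 ?sumr_ge0 // invr_ge0.
have cd : c *+ d.+1 = t by rewrite -mulr_natr mulrAC mulVf ?mul1r ?pnatr_eq0.
apply: le_trans (ler_sum _ (fun j _ => exprS_ge_tangent k (y0 j) c0)).
rewrite big_split /= -mulr_sumr sumrB !sumr_const card_ord cd subrr mulr0 addr0.
by rewrite exprS -mulrnAl cd.
Qed.

Lemma sum_expr_le_of_le_mean (R : numFieldType) m d
    (x : 'I_m -> R) (y : 'I_d -> R) p :
  (0 < p)%N -> (forall i, 0 <= x i) -> (forall j, 0 <= y j) ->
  \sum_i x i = \sum_j y j -> (forall i, x i <= d%:R^-1 * \sum_j y j) ->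
  \sum_i x i ^+ p <= \sum_j y j ^+ p.
Proof.
case: p => // k _ x0 y0 sum_xy x_le.
apply: le_trans (sum_exprS_ge_mean k y0); rewrite -[X in X * _]sum_xy.
by apply: sum_exprS_le_max => i; rewrite x0 x_le.
Qed.

Lemma char_poly_similar (R : comUnitRingType) n (P A : 'M[R]_n) :
  P \in unitmx -> char_poly (invmx P *m A *m P) = char_poly A.
Proof.
move=> Pu; rewrite /char_poly /char_poly_mx.
have -> : 'X%:M - map_mx polyC (invmx P *m A *m P) =
    map_mx polyC (invmx P) *m ('X%:M - map_mx polyC A) *m map_mx polyC P.
  rewrite mulmxBr mulmxBl !map_mxM; congr (_ - _).
  by rewrite scalar_mxC -mulmxA -map_mxM mulVmx // map_mx1 mulmx1.
by rewrite !det_mulmx mulrAC -det_mulmx -map_mxM mulVmx // map_mx1 det1 mul1r.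
Qed.

Lemma exp_similar (R : comUnitRingType) n (P A : 'M[R]_n) k :
  P \in unitmx -> (invmx P *m A *m P) ^+ k = invmx P *m A ^+ k *m P.
Proof.
move=> Pu; elim: k => [|k IH]; first by rewrite !expr0 mulmx1 mulVmx.
by rewrite !exprSr IH -!mulmxE !mulmxA mulmxK.
Qed.

Lemma exp_diag_mx (R : comPzRingType) n (D : 'rV[R]_n) k :
  diag_mx D ^+ k = diag_mx (\row_j (D 0 j ^+ k)).
Proof.
elim: k => [|k IH]; first by apply/matrixP => i j; rewrite !mxE; case: (i == j).
rewrite exprSr IH -mulmxE mulmx_diag; congr diag_mx; apply/rowP => j.
by rewrite !mxE exprSr.
Qed.

Section NormalMatrices.
Variables (C : numClosedFieldType) (n : nat).
Implicit Types (A : 'M[C]_n) (lam : 'I_n -> C).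

Lemma char_poly_normalmx A : A \is normalmx ->
  char_poly A = \prod_i ('X - (spectral_diag A 0 i)%:P).
Proof.
move=> /orthomx_spectralP {1}->; rewrite char_poly_similar ?spectral_unit //.
rewrite char_poly_trig ?diag_mx_is_trig //.
by apply: eq_bigr => i _; rewrite mxE eqxx mulr1n.
Qed.

Lemma mxtrace_exp_normalmx A k : A \is normalmx ->
  \tr (A ^+ k) = \sum_i spectral_diag A 0 i ^+ k.
Proof.
move=> /orthomx_spectralP {1}->; rewrite exp_similar ?spectral_unit //.
rewrite mxtrace_mulC mulmxA mulmxV ?spectral_unit // mul1mx exp_diag_mx.
by rewrite mxtrace_diag; apply: eq_bigr => i _; rewrite mxE.
Qed.

Lemma psdmx_normal A : psdmx A -> A \is normalmx.
Proof. by case=> /hermitian_normalmx. Qed.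

(* Evaluate the quadratic form of A at the i-th row of its unitary diagonalizer. *)
Lemma psdmx_spectral_diag_ge0 A i : psdmx A -> 0 <= spectral_diag A 0 i.
Proof.
move=> [/hermitian_normalmx /orthomx_spectralP A_eq A_psd].
set P := spectralmx A in A_eq.
have P_unitary : P \is unitarymx by exact: spectral_unitarymx.
have := A_psd ('e_i *m P); rewrite {1}A_eq invmx_unitary //.
rewrite trmx_mul map_mxM !mulmxA !mulmxtVK // -rowE row_diag_mx -scalemxAl.
have -> : ('e_i : 'rV[C]_n)^t* = delta_mx i 0.
  by apply/matrixP => a b; rewrite !mxE conjC_nat andbC.
rewrite !mxE (bigD1 i) //= big1 ?addr0 ?mxE ?eqxx ?mulr1 // => j /negbTE ji.
by rewrite !mxE ji mul0r.
Qed.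

Lemma perm_eq_eigen_spectral A lam : A \is normalmx ->
  char_poly A = \prod_i ('X - (lam i)%:P) ->
  perm_eq (codom lam) (codom (spectral_diag A 0)).
Proof.
move=> A_normal charA; apply: prod_XsubC_eq.
by rewrite !big_image -charA char_poly_normalmx.
Qed.

Lemma psdmx_eigen_ge0 A lam i : psdmx A ->
  char_poly A = \prod_i ('X - (lam i)%:P) -> 0 <= lam i.
Proof.
move=> A_psd /(perm_eq_eigen_spectral (psdmx_normal A_psd)) /perm_mem eq_mem.
have : lam i \in codom lam by exact: codom_f.
by rewrite eq_mem => /codomP [j ->]; exact: psdmx_spectral_diag_ge0.
Qed.

Lemma mxtrace_exp_eigen A lam k : A \is normalmx ->
  char_poly A = \prod_i ('X - (lam i)%:P) ->
  \tr (A ^+ k) = \sum_i lam i ^+ k.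
Proof.
move=> A_normal /(perm_eq_eigen_spectral A_normal) perm_lam.
have := @perm_big _ +%R 0 _ _ _ xpredT (fun x => x ^+ k) perm_lam.
by rewrite !big_image mxtrace_exp_normalmx // => ->.
Qed.

Lemma mxtrace_eigen A lam : A \is normalmx ->
  char_poly A = \prod_i ('X - (lam i)%:P) -> \tr A = \sum_i lam i.
Proof.
move=> A_normal charA; rewrite -[A]expr1 (mxtrace_exp_eigen 1 A_normal charA).
by under eq_bigr do rewrite expr1.
Qed.

End NormalMatrices.

Section GramSums.
Variable C : numClosedFieldType.

Lemma psdmx_gram_sum N k m (X : 'I_N -> 'M[C]_(k, m)) :
  psdmx (\sum_j (X j)^t* *m X j).
Proof.
split.
  apply/is_hermitianmxP; rewrite expr0 scale1r; apply/matrixP => a b.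
  rewrite !mxE !summxE rmorph_sum; apply: eq_bigr => j _.
  rewrite !mxE rmorph_sum; apply: eq_bigr => i _.
  by rewrite !mxE rmorphM /= conjCK mulrC.
move=> v; rewrite mulmx_sumr mulmx_suml summxE; apply: sumr_ge0 => j _.
have -> : v *m ((X j)^t* *m X j) *m v^t* = (v *m (X j)^t*) *m (v *m (X j)^t*)^t*.
  by rewrite trmx_mul map_mxM trmxCK !mulmxA.
by rewrite mxE; apply: sumr_ge0 => i _; rewrite !mxE mul_conjC_ge0.
Qed.

Lemma is_psd_sqrt_gram m (Y A : 'M[C]_m) : is_psd_sqrt Y A -> Y^t* *m Y = A.
Proof.
case=> [[/is_hermitianmxP Y_herm _] <-].
by rewrite expr0 scale1r in Y_herm; rewrite -Y_herm.
Qed.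

End GramSums.

Theorem lemma5p10 (C : numClosedFieldType) (N n d : nat)
    (M : 'I_N -> 'M[C]_(d, n * d))
    (lam : 'I_(n * d) -> C) (nu : 'I_d -> C) :
  char_poly (\sum_(j < N) (M j) ^t* *m M j) = \prod_(i < n * d) ('X - (lam i)%:P) ->
  char_poly (\sum_(j < N) M j *m (M j) ^t*) = \prod_(i < d) ('X - (nu i)%:P) ->
  \sum_(i < n * d) lam i = \sum_(j < d) nu j /\
  ((forall i, lam i <= d%:R^-1 * \sum_(j < d) nu j) ->
   forall p : nat, (2 <= p)%N ->
   forall (SA : 'M[C]_(n * d)) (SB : 'M[C]_d),
     is_psd_sqrt SA (\sum_(j < N) (M j) ^t* *m M j) ->
     is_psd_sqrt SB (\sum_(j < N) M j *m (M j) ^t*) ->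
     schatten_2p_pow p SA <= schatten_2p_pow p SB).
Proof.
move=> charA charB.
have psdA := psdmx_gram_sum M.
have psdB : psdmx (\sum_j M j *m (M j)^t*).
  by have := psdmx_gram_sum (fun j => (M j)^t*); under eq_bigr do rewrite trmxCK.
have trA k := mxtrace_exp_eigen k (psdmx_normal psdA) charA.
have trB k := mxtrace_exp_eigen k (psdmx_normal psdB) charB.
have sum_eq : \sum_i lam i = \sum_j nu j.
  rewrite -(mxtrace_eigen (psdmx_normal psdA) charA).
  rewrite -(mxtrace_eigen (psdmx_normal psdB) charB) !raddf_sum.
  by apply: eq_bigr => j _; exact: mxtrace_mulC.
split => // lam_le p p_ge2 SA SB sqrtA sqrtB.
rewrite /schatten_2p_pow (is_psd_sqrt_gram sqrtA) (is_psd_sqrt_gram sqrtB) trA trB.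
apply: sum_expr_le_of_le_mean (ltnW p_ge2) _ _ sum_eq lam_le => [i|j].
  exact: psdmx_eigen_ge0 psdA charA.
exact: psdmx_eigen_ge0 psdB charB.
Qed.
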